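(* For any $\mathbf z\in\mathrm{Sym}^k\mathbb R$, there is a unique decomposition $\mathbf z=\mathbf z_1+\dots+\mathbf z_m$ such that each $\mathbf z_i$ is well contained in $B_{\mathbf z_i}$, and the boxes $B_{\mathbf z_i}$ are pairwise disjoint and ordered $B_{\mathbf z_1}<B_{\mathbf z_2}<\dots<B_{\mathbf z_m}$.
   Context: Fix $b>0$. For $x\in\mathbb R$ and $k\ge1$, $B_k(x)=[x-kb,x+kb]$. For a nonempty $\mathbf z\in\mathrm{Sym}^n\mathbb R$ (unordered tuple with multiplicity, $|\mathbf z|=n$, $+$ union with multiplicity), $c(\mathbf z)$ is the average of its points and $B_{\mathbf z}=B_{|\mathbf z|}(c(\mathbf z))$. Writing $\mathbf z=(x_1\le\dots\le x_n)$, a consecutive subset is $\{x_p,x_{p+1},\dots,x_q\}$. $\mathbf z$ is well contained in $B_{\mathbf z}$ if $B_{\mathbf z'}\subset B_{\mathbf z}$ for every consecutive subset $\mathbf z'\subset\mathbf z$. For intervals, $B<B'$ means every point of $B$ is less than every point of $B'$. *)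

(* Sym^n R is modelled by seq R up to permutation (perm_eq). *)
From mathcomp Require Import all_boot all_order all_algebra.
From mathcomp Require Import reals.
Set Implicit Arguments. Unset Strict Implicit. Unset Printing Implicit Defensive.
Import Order.TTheory GRing.Theory Num.Theory.
Local Open Scope ring_scope.

Section Boxes.
Variables (R : realType) (b : R).

(* c(z): average of the points of z (used only for nonempty z) *)
Definition center (z : seq R) : R := (\sum_(x <- z) x) / (size z)%:R.

Definition box (k : nat) (x : R) : pred R :=
  fun y => (x - k%:R * b <= y) && (y <= x + k%:R * b).

Definition boxz (z : seq R) : pred R := box (size z) (center z).

Definition box_sub (B B' : pred R) : Prop := forall y, B y -> B' y.

Definition box_lt (B B' : pred R) : Prop := forall x y, B x -> B' y -> x < y.

(* consecutive subset {x_p+1, ..., x_q} of z = (x_1 <= ... <= x_n), 0 <= p < q <= n *)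
Definition consec (z : seq R) (p q : nat) : seq R :=
  drop p (take q (sort <=%R z)).

Definition well_contained (z : seq R) : Prop :=
  forall p q : nat, (p < q)%N -> (q <= size z)%N ->
    box_sub (boxz (consec z p q)) (boxz z).

Definition good_decomp (z : seq R) (zs : seq (seq R)) : Prop :=
  perm_eq z (flatten zs) /\
  (forall i, (i < size zs)%N -> nth [::] zs i != [::]) /\
  (forall i, (i < size zs)%N -> well_contained (nth [::] zs i)) /\
  (forall i j, (i < j)%N -> (j < size zs)%N ->
     box_lt (boxz (nth [::] zs i)) (boxz (nth [::] zs j))).

End Boxes.

From mathcomp Require Import all_boot all_order all_algebra.
From mathcomp Require Import reals ring lra.
Set Implicit Arguments. Unset Strict Implicit. Unset Printing Implicit Defensive.
Import Order.TTheory GRing.Theory Num.Theory.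
Local Open Scope ring_scope.

(* Sort the points and write l(s), r(s) for the ends of B_s. Existence: insert
   the points from right to left into a chain of blocks with disjoint ordered
   boxes, merging the new block with its right neighbour as long as their boxes
   meet. A merge keeps well containment: a consecutive part of Y ++ X splits as
   w1 ++ w2 with w1, w2 consecutive in Y, X, and the box of w1 ++ w2 stays in
   B_(Y ++ X) by an inequality between weighted averages which needs exactly
   that B_Y and B_X meet. Uniqueness: the first block X of such a chain is the
   longest well-contained prefix. If a well-contained Y = X ++ T were longer,
   then B_T would lie right of B_X, and the identity
   |Y| (l(Y) - l(X)) = |T| (l(T) - r(X)) would give l(Y) > l(X), although B_X
   sits inside B_Y. *)

Lemma size_drop_take (T : Type) (s : seq T) p q :
  size (drop p (take q s)) = (minn q (size s) - p)%N.
Proof. by rewrite size_drop size_take_min. Qed.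

Lemma size_drop_take_le (T : Type) (s : seq T) p q :
  (size (drop p (take q s)) <= size s)%N.
Proof. by rewrite size_drop_take (leq_trans (leq_subr _ _) (geq_minr _ _)). Qed.

Lemma drop_take_minn (T : Type) (s : seq T) p q :
  drop p (take (minn q (size s)) s) = drop p (take q s).
Proof. by rewrite take_min take_size. Qed.

Lemma drop_take_cat (T : Type) (s1 s2 : seq T) p q :
  drop p (take q (s1 ++ s2)) =
  drop p (take q s1) ++ drop (p - size s1) (take (q - size s1) s2).
Proof.
rewrite take_cat; case: ltnP => [/ltnW|] qs1.
  by rewrite -subn_eq0 in qs1; rewrite (eqP qs1) take0 cats0.
rewrite drop_cat (take_oversize qs1); case: ltnP => [/ltnW|] ps1.
  by rewrite -subn_eq0 in ps1; rewrite (eqP ps1) drop0.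
by rewrite (drop_oversize ps1).
Qed.

Lemma sorted_cat_le d (T : porderType d) (s t : seq T) (x y : T) :
  sorted <=%O (s ++ t) -> x \in s -> y \in t -> (x <= y)%O.
Proof.
rewrite (sorted_pairwise le_trans) pairwise_cat => /and3P[/allrelP xy _ _].
exact: xy.
Qed.

Section Boxes.
Variables (R : realType) (b : R).
Hypothesis b_ge0 : 0 <= b.

Definition boxl (s : seq R) : R := center s - (size s)%:R * b.
Definition boxr (s : seq R) : R := center s + (size s)%:R * b.

Lemma boxl_le_boxr (s : seq R) : boxl s <= boxr s.
Proof. by rewrite /boxl /boxr; have := mulr_ge0 (ler0n R (size s)) b_ge0; lra. Qed.

Lemma box_subE (A B : seq R) :
  box_sub (boxz b A) (boxz b B) <-> boxl B <= boxl A /\ boxr A <= boxr B.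
Proof.
rewrite /box_sub /boxz /box -/(boxl A) -/(boxr A) -/(boxl B) -/(boxr B).
split=> [sub|[lBA rAB] y /andP[lAy yrA]]; last by apply/andP; split; lra.
have lAA := boxl_le_boxr A.
have /andP[lBA _] : boxl B <= boxl A <= boxr B by apply: sub; rewrite lexx lAA.
by have /andP[_ rAB] : boxl B <= boxr A <= boxr B by apply: sub; rewrite lexx lAA.
Qed.

Lemma box_ltE (X Y : seq R) : box_lt (boxz b X) (boxz b Y) <-> boxr X < boxl Y.
Proof.
rewrite /box_lt /boxz /box -/(boxl X) -/(boxr X) -/(boxl Y) -/(boxr Y).
split=> [lt|XY x y /andP[_ xX] /andP[Yy _]]; last by lra.
by apply: lt; rewrite ?boxl_le_boxr ?lexx.
Qed.

Lemma center_perm (s t : seq R) : perm_eq s t -> center s = center t.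
Proof. by move=> st; rewrite /center (perm_big _ st) (perm_size st). Qed.

Lemma boxz_perm (s t : seq R) : perm_eq s t -> boxz b s = boxz b t.
Proof. by move=> st; rewrite /boxz (center_perm st) (perm_size st). Qed.

Lemma boxz_sort (s : seq R) : boxz b (sort <=%R s) = boxz b s.
Proof. by apply: boxz_perm; rewrite perm_sort. Qed.

Lemma boxl_perm (s t : seq R) : perm_eq s t -> boxl s = boxl t.
Proof. by move=> st; rewrite /boxl (center_perm st) (perm_size st). Qed.

Lemma boxr_perm (s t : seq R) : perm_eq s t -> boxr s = boxr t.
Proof. by move=> st; rewrite /boxr (center_perm st) (perm_size st). Qed.

Lemma sum_center (s : seq R) : center s * (size s)%:R = \sum_(x <- s) x.
Proof.
by rewrite /center; case: s => [|x s]; rewrite ?big_nil ?mulr0 // divfK ?pnatr_eq0.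
Qed.

Lemma size_boxr (s : seq R) : (size s)%:R * boxr s = \sum_(x <- s) x + (size s)%:R ^+ 2 * b.
Proof. by rewrite /boxr -sum_center; ring. Qed.

Lemma center_opp (s : seq R) : center (map -%R s) = - center s.
Proof. by rewrite /center big_map sumrN size_map mulNr. Qed.

Lemma boxl_opp (s : seq R) : boxl (map -%R s) = - boxr s.
Proof. by rewrite /boxl /boxr center_opp size_map opprD. Qed.

Lemma boxr_opp (s : seq R) : boxr (map -%R s) = - boxl s.
Proof. by rewrite /boxl /boxr center_opp size_map opprB addrC. Qed.

Definition nested (s : seq R) : Prop :=
  forall p q, drop p (take q s) != [::] ->
    boxl s <= boxl (drop p (take q s)) /\ boxr (drop p (take q s)) <= boxr s.

Lemma well_contained_sortE (s : seq R) :
  well_contained b s <-> nested (sort <=%R s).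
Proof.
have ss : perm_eq (sort <=%R s) s by rewrite perm_sort.
rewrite /well_contained /nested /consec -(size_sort <=%R).
split=> [wc p q | N p q pq qs].
  rewrite -size_eq0 size_drop_take subn_eq0 -ltnNge => pq.
  have := wc p _ pq (geq_minr _ _).
  by rewrite box_subE drop_take_minn (boxl_perm ss) (boxr_perm ss).
rewrite box_subE -(boxl_perm ss) -(boxr_perm ss); apply: N.
by rewrite -size_eq0 size_drop_take (minn_idPl qs) subn_eq0 -ltnNge.
Qed.

Lemma mem_nested (s : seq R) (x : R) : nested s -> x \in s -> boxl s <= x <= boxr s.
Proof.
move=> N xs; set i := index x s.
have sx : drop i (take i.+1 s) = [:: x].
  by rewrite -add1n -take_drop (drop_nth x) ?index_mem // nth_index //= take0.
have c1 : center [:: x] = x by rewrite /center big_seq1 divr1.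
have [] := N i i.+1; rewrite sx // /boxl /boxr c1 mul1r.
move=> l r; apply/andP; split; [apply: le_trans l _ | apply: le_trans _ r].
  by rewrite gerBl.
by rewrite lerDl.
Qed.

(* Read a = |w1|, A = |Y|, s1 = sum of w1, R1 = r(Y), and likewise d, D, s2, R2
   for w2 and X: this is r(w1 ++ w2) <= r(Y ++ X) multiplied by |w1 ++ w2| and
   |Y ++ X|. *)
Lemma merge_moment_le (a d A D s1 s2 R1 R2 : R) :
  0 <= a -> a <= A -> 0 <= d -> d <= D ->
  s1 + a ^+ 2 * b <= a * R1 -> s2 + d ^+ 2 * b <= d * R2 ->
  R1 - 2 * A * b <= R2 -> R2 - 2 * D * b <= R1 ->
  (A + D) * (s1 + s2 + (a + d) ^+ 2 * b) <=
    (a + d) * (A * R1 + D * R2 + 2 * A * D * b).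
Proof.
move=> a0 aA d0 dD h1 h2 h12 h21.
have moments : (A + D) * (s1 + s2 + (a + d) ^+ 2 * b) <=
    (A + D) * (a * R1 + d * R2 + 2 * a * d * b).
  by rewrite ler_wpM2l; lra.
(* Bounding R1 - R2 by the overlap hypothesis that matches the sign of
   dA - aD leaves 2ab(A+D)(D-d), resp. 2db(A+D)(A-a). *)
suff : 0 <= (d * A - a * D) * (R1 - R2) + 2 * b * (A * D * (a + d) - a * d * (A + D)).
  by move: moments; lra.
have [aDdA|dAaD] := lerP (a * D) (d * A).
- have : (d * A - a * D) * (- (2 * D * b)) <= (d * A - a * D) * (R1 - R2).
    by rewrite ler_wpM2l ?subr_ge0 //; lra.
  have : 0 <= 2 * b * a * (A + D) * (D - d) by rewrite !mulr_ge0 ?subr_ge0 //; lra.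
  lra.
- have : (a * D - d * A) * (- (2 * A * b)) <= (a * D - d * A) * (R2 - R1).
    by rewrite ler_wpM2l ?subr_ge0 ?(ltW dAaD) //; lra.
  have : 0 <= 2 * b * d * (A + D) * (A - a) by rewrite !mulr_ge0 ?subr_ge0 //; lra.
  lra.
Qed.

Lemma boxr_cat_le (Y X w1 w2 : seq R) :
  (size w1 <= size Y)%N -> (size w2 <= size X)%N -> w1 ++ w2 != [::] ->
  (size w1)%:R * boxr w1 <= (size w1)%:R * boxr Y ->
  (size w2)%:R * boxr w2 <= (size w2)%:R * boxr X ->
  boxl X <= boxr Y -> boxl Y <= boxr X ->
  boxr (w1 ++ w2) <= boxr (Y ++ X).
Proof.
move=> w1Y w2X w0 h1 h2 XY YX.
have Ew := size_boxr (w1 ++ w2); have EYX := size_boxr (Y ++ X).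
have EY := size_boxr Y; have EX := size_boxr X.
rewrite size_cat natrD big_cat /= in Ew; rewrite size_cat natrD big_cat /= in EYX.
rewrite size_boxr in h1; rewrite size_boxr in h2.
have o1 : boxr Y - 2 * (size Y)%:R * b <= boxr X by move: YX; rewrite /boxl /boxr; lra.
have o2 : boxr X - 2 * (size X)%:R * b <= boxr Y by move: XY; rewrite /boxl /boxr; lra.
rewrite -(ler_nat R) in w1Y; rewrite -(ler_nat R) in w2X.
have := merge_moment_le (ler0n _ _) w1Y (ler0n _ _) w2X h1 h2 o1 o2.
set a := (size w1)%:R; set d := (size w2)%:R; set A := (size Y)%:R; set D := (size X)%:R.
have -> : A * boxr Y + D * boxr X + 2 * A * D * b = (A + D) * boxr (Y ++ X).
  by rewrite EYX EY EX; ring.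
have ad0 : 0 < a + d by rewrite -natrD ltr0n -size_cat lt0n size_eq0.
have AD0 : 0 < A + D by apply: lt_le_trans ad0 _; apply: lerD.
by rewrite -Ew mulrCA ler_pM2l // ler_pM2l.
Qed.

Lemma boxl_cat_ge (Y X w1 w2 : seq R) :
  (size w1 <= size Y)%N -> (size w2 <= size X)%N -> w1 ++ w2 != [::] ->
  (size w1)%:R * boxl Y <= (size w1)%:R * boxl w1 ->
  (size w2)%:R * boxl X <= (size w2)%:R * boxl w2 ->
  boxl X <= boxr Y -> boxl Y <= boxr X ->
  boxl (Y ++ X) <= boxl (w1 ++ w2).
Proof.
move=> w1Y w2X w0 h1 h2 XY YX; rewrite -lerN2 -!boxr_opp !map_cat.
apply: boxr_cat_le; rewrite ?size_map ?boxr_opp ?boxl_opp ?mulrN ?lerN2 //.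
by rewrite -map_cat -size_eq0 size_map size_eq0.
Qed.

Lemma nested_moments (Y : seq R) p q (w := drop p (take q Y)) : nested Y ->
  (size w)%:R * boxl Y <= (size w)%:R * boxl w /\
  (size w)%:R * boxr w <= (size w)%:R * boxr Y.
Proof.
move=> N; have [w0|/N[lY rY]] := eqVneq w [::]; first by rewrite w0 !mul0r.
by rewrite !ler_wpM2l.
Qed.

Lemma nested_cat (Y X : seq R) : nested Y -> nested X ->
  boxl X <= boxr Y -> boxl Y <= boxr X -> nested (Y ++ X).
Proof.
move=> NY NX XY YX p q; rewrite drop_take_cat => w0.
have [lY rY] := nested_moments p q NY.
have [lX rX] := nested_moments (p - size Y) (q - size Y) NX.
by split; [apply: boxl_cat_ge | apply: boxr_cat_le]; rewrite ?size_drop_take_le.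
Qed.

Definition block (s : seq R) : Prop := [/\ s != [::], sorted <=%R s & nested s].

Definition box_before (X Y : seq R) : bool := boxr X < boxl Y.

Definition chain (zs : seq (seq R)) : Prop :=
  (forall X, X \in zs -> block X) /\ sorted box_before zs.

Lemma box_before_trans : transitive box_before.
Proof. by move=> Y X Z XY YZ; apply: lt_trans XY (le_lt_trans (boxl_le_boxr Y) YZ). Qed.

Lemma chain_head X xs : chain (X :: xs) -> block X.
Proof. by case=> bxs _; apply/bxs/mem_head. Qed.

Lemma chain_behead X xs : chain (X :: xs) -> chain xs.
Proof.
by case=> bxs sxs; split=> [Y Yxs|]; [apply/bxs/mem_behead | apply: path_sorted sxs].
Qed.

Lemma block1 (x : R) : block [:: x].
Proof. by split=> //; case=> [|p] [|q] //= _; split. Qed.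

Lemma chain_push Y xs : block Y -> chain xs -> sorted <=%R (Y ++ flatten xs) ->
  exists ys, flatten ys = Y ++ flatten xs /\ chain ys.
Proof.
elim: xs Y => [|X xs IH] Y bY cxs sYxs.
  by exists [:: Y]; split; [rewrite /= cats0 | split=> // Z /[1!inE] /eqP->].
have [YX|] := boolP (box_before Y X).
  exists [:: Y, X & xs]; split=> //; case: cxs => bxs sxs.
  by split=> [Z /[1!inE] /predU1P[->|/bxs]|] //=; rewrite YX.
rewrite -leNgt => XY.
have [Yn sY NY] := bY; have [Xn sX NX] := chain_head cxs.
have sYX : sorted <=%R (Y ++ X) by move: sYxs; rewrite /= catA => /cat_sorted2[].
have YX : boxl Y <= boxr X.
  have yY : head 0 Y \in Y by case: (Y) Yn => //= *; rewrite mem_head.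
  have xX : head 0 X \in X by case: (X) Xn => //= *; rewrite mem_head.
  have /andP[Yy _] := mem_nested NY yY; have /andP[_ xX'] := mem_nested NX xX.
  exact: le_trans Yy (le_trans (sorted_cat_le sYX yY xX) xX').
have bYX : block (Y ++ X).
  by split=> //; [case: (Y) Yn | apply: nested_cat].
have sYXxs : sorted <=%R ((Y ++ X) ++ flatten xs) by rewrite -catA.
have [ys [Eys cys]] := IH (Y ++ X) bYX (chain_behead cxs) sYXxs.
by exists ys; rewrite Eys /= catA.
Qed.

Lemma chain_exists s : sorted <=%R s -> exists ys, flatten ys = s /\ chain ys.
Proof.
elim: s => [_|x s IH sxs]; first by exists [::].
have [ys [Eys cys]] := IH (path_sorted sxs).
have sxys : sorted <=%R ([:: x] ++ flatten ys) by rewrite Eys.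
have [zs [Ezs czs]] := chain_push (block1 x) cys sxys.
by exists zs; rewrite Ezs Eys.
Qed.

Lemma boxl_cat (X T : seq R) :
  (size (X ++ T))%:R * (boxl (X ++ T) - boxl X) = (size T)%:R * (boxl T - boxr X).
Proof.
have := sum_center (X ++ T); have := sum_center X; have := sum_center T.
by rewrite big_cat /= /boxl /boxr size_cat natrD; lra.
Qed.

Lemma nested_take (Z : seq R) k : nested Z -> Z != [::] -> (0 < k)%N ->
  boxl Z <= boxl (take k Z).
Proof.
move=> NZ Zn k0; have [] := NZ 0%N k; rewrite drop0 //.
by rewrite -size_eq0 size_take_min -lt0n leq_min k0 lt0n size_eq0.
Qed.

Lemma boxl_take_chain Z xs k : chain (Z :: xs) -> (0 < k)%N ->
  boxl Z <= boxl (take k (Z ++ flatten xs)).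
Proof.
elim: xs Z k => [|Z' xs IH] Z k cZ k0; have [Zn _ NZ] := chain_head cZ.
  by rewrite cats0; apply: nested_take.
rewrite /= take_cat; case: ltnP => [_|Zk]; first exact: nested_take.
set T := take (k - size Z) (Z' ++ flatten xs).
have [->|Tn] := eqVneq T [::]; first by rewrite cats0.
have ZZ' : box_before Z Z' by case: cZ => _ /andP[].
have T0 : (0 < k - size Z)%N by move: Tn; rewrite /T lt0n; case: (k - size Z)%N; rewrite ?take0.
have Z'T := IH Z' _ (chain_behead cZ) T0.
have : 0 <= (size (Z ++ T))%:R * (boxl (Z ++ T) - boxl Z).
  by rewrite boxl_cat mulr_ge0 // subr_ge0 ltW // (lt_le_trans ZZ' Z'T).
by rewrite pmulr_rge0 ?subr_ge0 // ltr0n size_cat addn_gt0 lt0n size_eq0 Zn.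
Qed.

Lemma chain_head_maximal X xs Y F : chain (X :: xs) -> nested Y ->
  X ++ flatten xs = Y ++ F -> (size Y <= size X)%N.
Proof.
move=> cX NY E; rewrite leqNgt; apply/negP => XY.
have [Xn _ _] := chain_head cX.
set T := take (size Y - size X) (flatten xs).
have EY : Y = X ++ T.
  by have := congr1 (take (size Y)) E; rewrite take_cat ltnNge (ltnW XY) take_size_cat.
case: xs cX E @T EY => [|Z xs] cX E T EY.
  by move: XY; rewrite EY /T cats0 ltnn.
have k0 : (0 < size Y - size X)%N by rewrite subn_gt0.
have ZT := boxl_take_chain (chain_behead cX) k0.
have XZ : box_before X Z by case: cX => _ /andP[].
have EX : take (size X) Y = X by rewrite EY take_size_cat.
have XY0 : drop 0 (take (size X) Y) != [::] by rewrite drop0 EX.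
have [] := NY _ _ XY0; rewrite drop0 EX => YX _.
have T0 : (0 < size T)%N by rewrite -(ltn_add2l (size X)) addn0 -size_cat -EY.
have : 0 < (size T)%:R * (boxl T - boxr X).
  by rewrite mulr_gt0 ?ltr0n // subr_gt0 (lt_le_trans XZ ZT).
rewrite -boxl_cat -EY pmulr_rgt0 ?ltr0n ?(leq_ltn_trans (leq0n _) XY) //.
by rewrite subr_gt0 ltNge YX.
Qed.

Lemma chain_flatten_inj xs ys : chain xs -> chain ys -> flatten xs = flatten ys -> xs = ys.
Proof.
elim: xs ys => [|X xs IH] [|Y ys] cxs cys //=.
- by have [Yn _ _] := chain_head cys; case: (Y) Yn.
- by have [Xn _ _] := chain_head cxs; case: (X) Xn.
move=> E; have [_ _ NX] := chain_head cxs; have [_ _ NY] := chain_head cys.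
have sXY : size X = size Y.
  by apply/eqP; rewrite eqn_leq (chain_head_maximal cys NX (esym E)) (chain_head_maximal cxs NY E).
have EXY : X = Y by have := congr1 (take (size X)) E; rewrite !take_size_cat.
congr (_ :: _) => //; apply: IH (chain_behead cxs) (chain_behead cys) _.
by have := congr1 (drop (size X)) E; rewrite !drop_size_cat.
Qed.

Lemma chain_sorted xs : chain xs -> sorted <=%R (flatten xs).
Proof.
elim: xs => [|X xs IH] cxs //=; have [_ sX NX] := chain_head cxs.
rewrite (sorted_pairwise le_trans) pairwise_cat -!(sorted_pairwise le_trans).
rewrite sX IH ?andbT; last exact: chain_behead cxs.
apply/allrelP => x y xX /flattenP[Z Zxs yZ].
have XZ : box_before X Z by case: cxs => _ /(order_path_min box_before_trans) /allP; apply.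
have [_ _ NZ] := (chain_behead cxs).1 Z Zxs.
have /andP[_ xXr] := mem_nested NX xX; have /andP[Zly _] := mem_nested NZ yZ.
exact: le_trans xXr (le_trans (ltW XZ) Zly).
Qed.

Lemma chain_good_decomp z ys : chain ys -> perm_eq z (flatten ys) -> good_decomp b z ys.
Proof.
case=> bys sys zys; split=> //; split; [|split] => [i lt | i lt | i j ij lt].
- by have [] := bys _ (mem_nth [::] lt).
- by have [_ sX NX] := bys _ (mem_nth [::] lt); apply/well_contained_sortE; rewrite sort_le_id.
- apply/box_ltE; apply: (sorted_ltn_nth box_before_trans [::] sys) => //.
  by rewrite inE (ltn_trans ij lt).
Qed.

Lemma good_decomp_chain z zs : good_decomp b z zs ->
  chain (map (sort <=%R) zs) /\ flatten (map (sort <=%R) zs) = sort <=%R z.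
Proof.
case=> pz [ne [wc lt]].
have cz : chain (map (sort <=%R) zs).
  split=> [X /mapP[Z Zzs ->] | ].
    have iZ : (index Z zs < size zs)%N by rewrite index_mem.
    rewrite -(nth_index [::] Zzs); split; first by rewrite -size_eq0 size_sort size_eq0 ne.
      exact: sort_le_sorted.
    exact/well_contained_sortE/wc.
  apply/(sortedP [::]) => i; rewrite size_map => ilt.
  by rewrite !(nth_map [::]) ?(ltnW ilt) // /box_before -box_ltE !boxz_sort; apply: lt.
split=> //; apply: le_sorted_eq (chain_sorted cz) (sort_le_sorted z) _.
have perm_sorted_blocks (ws : seq (seq R)) : perm_eq (flatten ws) (flatten (map (sort <=%R) ws)).
  by elim: ws => //= w ws IH; rewrite perm_cat // perm_sym perm_sort.
by rewrite perm_sym perm_sort (perm_trans pz) ?perm_sorted_blocks.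
Qed.

End Boxes.

Theorem lemma4p2 (R : realType) (b : R) (hb : 0 < b) (z : seq R) :
  (exists zs : seq (seq R), good_decomp b z zs) /\
  (forall zs ws : seq (seq R), good_decomp b z zs -> good_decomp b z ws ->
     size zs = size ws /\
     (forall i, (i < size zs)%N -> perm_eq (nth [::] zs i) (nth [::] ws i))).
Proof.
have b0 := ltW hb; split.
  have [ys [Eys cys]] := chain_exists b0 (sort_le_sorted z).
  by exists ys; apply: chain_good_decomp; rewrite // Eys perm_sym perm_sort.
move=> zs ws /(good_decomp_chain b0)[czs Ezs] /(good_decomp_chain b0)[cws Ews].
have E := chain_flatten_inj czs cws (etrans Ezs (esym Ews)).
have sz : size zs = size ws by rewrite -(size_map (sort <=%R) zs) E size_map.
split=> // i lt; apply/perm_sort_leP.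
by have := congr1 (nth [::] ^~ i) E; rewrite !(nth_map [::]) -?sz.
Qed.
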